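(* Let $\Omega\subset\mathbb{R}^n$ ($n\in\{2,3\}$) be a bounded polygonal/polyhedral Lipschitz domain, $f\in L^2(\Omega)$, $g\in H^1(\Omega)\cap C(\overline\Omega)$ with $g\le0$ on $\partial\Omega$, and $\mathcal T$ a conforming simplicial mesh. Let $(\boldsymbol\sigma_h,\lambda_h,u_h)\in K_h\times M_h$ be the solution of the discrete problem $$(\boldsymbol\sigma_h,\boldsymbol\tau_h-\boldsymbol\sigma_h)_\Omega+(\operatorname{div}(\boldsymbol\tau_h-\boldsymbol\sigma_h)+\mu_h-\lambda_h,u_h)_\Omega\ge(\mu_h-\lambda_h,g)_\Omega\ \ \forall(\boldsymbol\tau_h,\mu_h)\in K_h,\qquad (\operatorname{div}\boldsymbol\sigma_h+\lambda_h,v_h)_\Omega=-(f,v_h)_\Omega\ \ \forall v_h\in M_h.$$ Then: (i) $\operatorname{div}\boldsymbol\sigma_h+\lambda_h=-\Pi_h^0f$; (ii) $(\boldsymbol\sigma_h,\boldsymbol\tau_h)_\Omega+(\operatorname{div}\boldsymbol\tau_h,u_h)_\Omega=0$ for all $\boldsymbol\tau_h\in\mathrm{RT}^0(\mathcal T)$; (iii) $(\lambda_h,u_h-g)_\Omega=0$, or equivalently $\lambda_h(x)\,(u_h(x)-\Pi_h^0g(x))=0$ for a.e. $x\in\Omega$; (iv) $u_h-\Pi_h^0g\ge0$.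
   Context: $M_h:=\mathcal P^0(\mathcal T)$ (piecewise constants), $V_h:=\mathrm{RT}^0(\mathcal T)\times\mathcal P^0(\mathcal T)$ with $\mathrm{RT}^0(\mathcal T)$ the lowest-order Raviart–Thomas space, $K_h:=\{(\boldsymbol\tau_h,\mu_h)\in V_h:\mu_h|_T\ge0\ \forall T\in\mathcal T\}$. $\Pi_h^0$ is the $L^2(\Omega)$-orthogonal projection onto $\mathcal P^0(\mathcal T)$. *)

From mathcomp Require Import all_boot all_order all_algebra.
From mathcomp Require Import all_classical all_reals all_analysis.
Set Implicit Arguments. Unset Strict Implicit. Unset Printing Implicit Defensive.
Import Order.TTheory GRing.Theory Num.Theory.
Import numFieldNormedType.Exports.
Local Open Scope classical_set_scope.
Local Open Scope ring_scope.

(** Points of R^n are row vectors 'rV[R]_n; [Rn R n] is R^n equipped with the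
    Borel sigma-algebra (generated by the open sets of its usual topology). *)
Definition Rn (R : realType) (n : nat) := g_sigma_algebraType (@open 'rV[R]_n).

Definition box (R : realType) (n : nat) (a b : 'rV[R]_n) : set 'rV[R]_n :=
  [set x | forall i, a ord0 i <= x ord0 i <= b ord0 i].

(** [mu] is the Lebesgue measure on R^n: it gives to every box its volume.
    (This determines a measure on the Borel sets uniquely.) *)
Definition is_lebesgue (R : realType) (n : nat)
    (mu : {measure set (Rn R n) -> \bar R}) : Prop :=
  forall a b : 'rV[R]_n, (forall i, a ord0 i <= b ord0 i) ->
    mu (box a b) = (\prod_(i < n) (b ord0 i - a ord0 i))%:E.

Definition dotp (R : realType) (n : nat) (x y : 'rV[R]_n) : R :=
  \sum_(i < n) x ord0 i * y ord0 i.

Definition aff_indep (R : realType) (n : nat) (p : 'I_n.+1 -> 'rV[R]_n) : bool :=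
  row_free (\matrix_(k < n) (p (lift ord0 k) - p ord0)).

Definition face (R : realType) (n : nat) (p : 'I_n.+1 -> 'rV[R]_n)
    (K : pred 'I_n.+1) : set 'rV[R]_n :=
  [set x | exists l : 'I_n.+1 -> R,
     [/\ forall k, 0 <= l k, forall k, ~~ K k -> l k = 0,
         \sum_k l k = 1 & x = \sum_k l k *: p k]].

Definition simplex (R : realType) (n : nat) (p : 'I_n.+1 -> 'rV[R]_n) :
  set 'rV[R]_n := face p predT.

Definition common_vtx (R : realType) (n : nat) (I : finType)
    (vtx : I -> 'I_n.+1 -> 'rV[R]_n) (i j : I) : pred 'I_n.+1 :=
  fun k => [exists k', vtx i k == vtx j k'].

Definition conforming_mesh (R : realType) (n : nat) (Omega : set 'rV[R]_n)
    (I : finType) (vtx : I -> 'I_n.+1 -> 'rV[R]_n) : Prop :=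
  [/\ forall i, aff_indep (vtx i),
      forall i j, i != j -> simplex (vtx i) <> simplex (vtx j),
      forall i j, i != j ->
        simplex (vtx i) `&` simplex (vtx j) = face (vtx i) (common_vtx vtx i j)
    & \bigcup_(i in [set: I]) simplex (vtx i) = closure Omega].

Definition bounded_domain (R : realType) (n : nat) (Omega : set 'rV[R]_n) : Prop :=
  [/\ open Omega, connected Omega, Omega !=set0 & bounded_set Omega].

Definition L2 (R : realType) (n : nat) (mu : {measure set (Rn R n) -> \bar R})
    (Omega : set 'rV[R]_n) (f : 'rV[R]_n -> R) : Prop :=
  measurable_fun (Omega : set (Rn R n)) (f : Rn R n -> R) /\
  (\int[mu]_(x in (Omega : set (Rn R n))) ((f x) ^+ 2)%:E < +oo)%E.

Definition partial (R : realType) (n : nat) (k : 'I_n) (f : 'rV[R]_n -> R) :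
  'rV[R]_n -> R := fun x => 'D_(delta_mx ord0 k) f x.

Fixpoint Cm (R : realType) (n : nat) (m : nat) (f : 'rV[R]_n -> R) : Prop :=
  continuous f /\
  match m with
  | 0 => True
  | m'.+1 => forall k : 'I_n,
      (forall x, derivable f x (delta_mx ord0 k)) /\ Cm m' (partial k f)
  end.

Definition test_fun (R : realType) (n : nat) (Omega : set 'rV[R]_n)
    (phi : 'rV[R]_n -> R) : Prop :=
  (forall m, Cm m phi) /\
  exists K : set 'rV[R]_n, [/\ compact K, K `<=` Omega & forall x, ~ K x -> phi x = 0].

Definition H1 (R : realType) (n : nat) (mu : {measure set (Rn R n) -> \bar R})
    (Omega : set 'rV[R]_n) (g : 'rV[R]_n -> R) : Prop :=
  L2 mu Omega g /\
  exists G : 'I_n -> 'rV[R]_n -> R, forall k,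
    L2 mu Omega (G k) /\
    forall phi, test_fun Omega phi ->
      \int[mu]_(x in (Omega : set (Rn R n))) (g x * partial k phi x) =
      - \int[mu]_(x in (Omega : set (Rn R n))) (G k x * phi x).

(** piecewise RT^0 fields: on element i, tau(x) = a_i + b_i x *)
Definition pwRT (R : realType) (n : nat) (I : finType) : Type :=
  ((I -> 'rV[R]_n) * (I -> R))%type.

Definition rt_val (R : realType) (n : nat) (I : finType) (tau : pwRT R n I)
    (i : I) (x : 'rV[R]_n) : 'rV[R]_n := tau.1 i + tau.2 i *: x.

Definition rt_sub (R : realType) (n : nat) (I : finType) (tau sigma : pwRT R n I) :
  pwRT R n I := (fun i => tau.1 i - sigma.1 i, fun i => tau.2 i - sigma.2 i).

(** RT^0(T): piecewise RT^0 fields that are H(div)-conforming, i.e. whose normal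
    components are continuous across every interior facet (two elements sharing
    n vertices). *)
Definition RT0 (R : realType) (n : nat) (I : finType)
    (vtx : I -> 'I_n.+1 -> 'rV[R]_n) (tau : pwRT R n I) : Prop :=
  forall i j, i != j -> #|common_vtx vtx i j| = n ->
  forall nu : 'rV[R]_n,
    (forall k k', common_vtx vtx i j k -> common_vtx vtx i j k' ->
       dotp (vtx i k - vtx i k') nu = 0) ->
    forall x, simplex (vtx i) x -> simplex (vtx j) x ->
      dotp (rt_val tau i x - rt_val tau j x) nu = 0.

(** (elementwise) divergence of x |-> a_i + b_i x, i.e. trace of its Jacobian b_i Id *)
Definition rt_div (R : realType) (n : nat) (I : finType) (tau : pwRT R n I) : I -> R :=
  fun i => n%:R * tau.2 i.

Definition in_Kh (R : realType) (n : nat) (I : finType)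
    (vtx : I -> 'I_n.+1 -> 'rV[R]_n) (tau : pwRT R n I) (m : I -> R) : Prop :=
  RT0 vtx tau /\ forall i, 0 <= m i.

(** L^2(Omega) products, computed element by element (the elements cover the
    closure of Omega and overlap only on null sets).  Scalar functions are given
    elementwise as [w : I -> 'rV -> R]; a P^0 function [c : I -> R] has value
    c i on element i. *)
Definition ipL2 (R : realType) (n : nat) (mu : {measure set (Rn R n) -> \bar R})
    (I : finType) (vtx : I -> 'I_n.+1 -> 'rV[R]_n)
    (v w : I -> 'rV[R]_n -> R) : R :=
  \sum_(i : I) \int[mu]_(x in (simplex (vtx i) : set (Rn R n))) (v i x * w i x).

Definition ipRT (R : realType) (n : nat) (mu : {measure set (Rn R n) -> \bar R})
    (I : finType) (vtx : I -> 'I_n.+1 -> 'rV[R]_n) (sigma tau : pwRT R n I) : R :=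
  \sum_(i : I) \int[mu]_(x in (simplex (vtx i) : set (Rn R n)))
     dotp (rt_val sigma i x) (rt_val tau i x).

Definition p0 (R : realType) (n : nat) (I : finType) (c : I -> R) : I -> 'rV[R]_n -> R :=
  fun i _ => c i.
Definition glob (R : realType) (n : nat) (I : finType) (f : 'rV[R]_n -> R) :
  I -> 'rV[R]_n -> R := fun _ x => f x.

(** Pi_h^0: L^2-orthogonal projection onto P^0(T), i.e. elementwise mean value *)
Definition Pi0 (R : realType) (n : nat) (mu : {measure set (Rn R n) -> \bar R})
    (I : finType) (vtx : I -> 'I_n.+1 -> 'rV[R]_n) (f : 'rV[R]_n -> R) : I -> R :=
  fun i => (fine (mu (simplex (vtx i) : set (Rn R n))))^-1 *
           \int[mu]_(x in (simplex (vtx i) : set (Rn R n))) f x.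

(* Testing the variational inequality with (sigma_h + tau_h, lambda_h) and
   (sigma_h - tau_h, lambda_h), tau_h in RT^0, gives (ii).  Testing it with
   (sigma_h, lambda_h + t 1_T) for one element T and t >= -lambda_h|_T gives
   t (|T| u_h|_T - int_T g) >= 0; t = 1 yields (iv) and t = -lambda_h|_T
   yields (iii).  Testing the equation with indicators of elements gives (i).
   The analytic input is that every element, being compact and containing a
   box, has finite positive Lebesgue measure, and that g, continuous on the
   closure of Omega, is integrable on it. *)

From mathcomp Require Import all_boot all_order all_algebra.
From mathcomp Require Import all_classical all_reals all_analysis.
From mathcomp Require Import lra.
Import Order.TTheory GRing.Theory Num.Theory.
Import numFieldNormedType.Exports.
Local Open Scope classical_set_scope.
Local Open Scope ring_scope.

Section borel_Rn.
Variables (R : realType) (n : nat).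

Lemma open_measurable_Rn (A : set 'rV[R]_n) : open A -> measurable (A : set (Rn R n)).
Proof. exact: sub_sigma_algebra. Qed.

Lemma closed_measurable_Rn (A : set 'rV[R]_n) :
  closed A -> measurable (A : set (Rn R n)).
Proof. by move/closed_openC/open_measurable_Rn/measurableC; rewrite setCK. Qed.

Lemma subspace_continuous_measurable_fun_Rn (D : set 'rV[R]_n) (h : 'rV[R]_n -> R) :
  measurable (D : set (Rn R n)) -> {within D, continuous h} ->
  measurable_fun (D : set (Rn R n)) (h : Rn R n -> R).
Proof.
move=> mD /continuousP ch.
apply: (measurability _ (measurable_realfun.RGenOpens.measurableE R)).
move=> _ [_ [a [b ->]] <-].
have /open_subspaceP [V oV VD] : open (h @^-1` `]a, b[%classic : set (subspace D)).
  by apply: ch; exact: interval_open.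
by rewrite setIC -VD; apply: measurableI => //; exact: open_measurable_Rn.
Qed.

Lemma box_closed (a b : 'rV[R]_n) : closed (box a b).
Proof.
have -> : box a b = \bigcap_(i in [set: 'I_n])
    ([set x | a ord0 i <= x ord0 i] `&` [set x | x ord0 i <= b ord0 i]).
  apply/seteqP; split => x /=; first by move=> H i _; have /andP[] := H i.
  by move=> H i; have [] := H i I => -> ->.
apply: closed_bigI => i _; have /continuous_closedP ci := @coord_continuous R 1 n ord0 i.
by apply: closedI; [exact: (ci _ (@closed_ge R _)) | exact: (ci _ (@closed_le R _))].
Qed.

End borel_Rn.

Section barycentric.
Variables (R : realType) (n : nat) (P : 'I_n.+1 -> 'rV[R]_n).

Definition edge_mx : 'M[R]_n := \matrix_(k < n) (P (lift ord0 k) - P ord0).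

Definition bary (x : 'rV[R]_n) : 'rV[R]_n := (x - P ord0) *m invmx edge_mx.

Lemma affine_comb_subE (l : 'I_n.+1 -> R) : \sum_k l k = 1 ->
  \sum_k l k *: P k - P ord0 = \row_k l (lift ord0 k) *m edge_mx.
Proof.
move=> l1; rewrite mulmx_sum_row.
under [RHS]eq_bigr do rewrite rowK mxE.
have P0E : P ord0 = \sum_k l k *: P ord0 by rewrite -scaler_suml l1 scale1r.
rewrite [X in _ - X = _]P0E -sumrB big_ord_recl /= subrr add0r.
by apply: eq_bigr => i _; rewrite scalerBr.
Qed.

Lemma bary_continuous k : continuous (fun x => bary x ord0 k).
Proof.
have -> : (fun x => bary x ord0 k) =
    (fun x => \sum_j (x ord0 j - P ord0 ord0 j) * invmx edge_mx j k).
  by apply: funext => x; rewrite !mxE; apply: eq_bigr => j _; rewrite !mxE.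
apply: continuous_big => [|j _ x]; first exact: add_continuous.
apply: (@continuousM R _ (fun x : 'rV[R]_n => x ord0 j - P ord0 ord0 j));
  last exact: cst_continuous.
apply: (@continuousB R R^o _ (fun x : 'rV[R]_n => x ord0 j));
  [exact: coord_continuous | exact: cst_continuous].
Qed.

Lemma simplex_coord_bound x j :
  simplex P x -> `|x ord0 j| <= \sum_k `|P k ord0 j|.
Proof.
move=> [l [l0 _ l1 ->]]; rewrite summxE.
apply: le_trans (ler_norm_sum _ _ _) _.
apply: ler_sum => k _; rewrite mxE normrM (ger0_norm (l0 k)).
by apply: ler_piMl => //; rewrite -l1 (bigD1 k) //= lerDl sumr_ge0.
Qed.

Lemma bary_sub_le (x y : 'rV[R]_n) (r : R) k : (forall j, `|x ord0 j - y ord0 j| <= r) ->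
  `|bary x ord0 k - bary y ord0 k| <= r * \sum_j `|invmx edge_mx j k|.
Proof.
move=> xy.
have -> : bary x ord0 k - bary y ord0 k = (bary x - bary y) ord0 k by rewrite !mxE.
rewrite /bary -mulmxBl opprB addrA subrK !mxE mulr_sumr.
apply: le_trans (ler_norm_sum _ _ _) _; apply: ler_sum => j _.
by rewrite normrM !mxE ler_wpM2r.
Qed.

Hypothesis hP : aff_indep P.

Lemma edge_mx_unit : edge_mx \in unitmx.
Proof. by rewrite -row_free_unit. Qed.

Lemma simplexE : simplex P =
  [set x | (forall k, 0 <= bary x ord0 k) /\ \sum_k bary x ord0 k <= 1].
Proof.
apply/seteqP; split => x /=.
- move=> [l [l0 _ l1 ->]].
  have -> : bary (\sum_k l k *: P k) = \row_k l (lift ord0 k).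
    by rewrite /bary affine_comb_subE // mulmxK // edge_mx_unit.
  split => [k|]; first by rewrite mxE.
  under eq_bigr do rewrite mxE.
  by move: l1; rewrite big_ord_recl => <-; rewrite lerDr.
- move=> [b0 b1].
  pose l k := oapp (fun i => bary x ord0 i) (1 - \sum_i bary x ord0 i) (unlift ord0 k).
  have l0 : l ord0 = 1 - \sum_i bary x ord0 i by rewrite /l unlift_none.
  have lS i : l (lift ord0 i) = bary x ord0 i by rewrite /l liftK.
  have l1 : \sum_k l k = 1.
    by rewrite big_ord_recl l0 (eq_bigr _ (fun i _ => lS i)) subrK.
  exists l; split => //.
  + by move=> k; case: (unliftP ord0 k) => [i ->|->]; rewrite ?lS // l0 subr_ge0.
  + have := @affine_comb_subE l l1.
    have -> : \row_k l (lift ord0 k) = bary x by apply/rowP => k; rewrite mxE lS.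
    rewrite /bary mulmxKV ?edge_mx_unit // => /(congr1 (+%R^~ (P ord0))).
    by rewrite !subrK.
Qed.

Lemma simplex_closed : closed (simplex P).
Proof.
have -> : simplex P = \bigcap_(k in [set: 'I_n]) [set x | 0 <= bary x ord0 k] `&`
    [set x | \sum_k bary x ord0 k <= 1].
  rewrite simplexE; apply/seteqP; split => x /= [b0 b1]; split => //.
  - by move=> k _; exact: b0.
  - by move=> k; exact: b0.
apply: closedI.
  apply: closed_bigI => k _.
  by have /continuous_closedP cb := bary_continuous k; exact: (cb _ (@closed_ge R 0)).
have /continuous_closedP cs : continuous (fun x => \sum_k bary x ord0 k).
  by apply: continuous_big => [|k _]; [exact: add_continuous | exact: bary_continuous].
exact: (cs _ (@closed_le R 1)).
Qed.

Lemma simplex_compact : compact (simplex P).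
Proof.
apply: (subclosed_compact simplex_closed
  (@rV_compact _ _ (fun j => `[- \sum_k `|P k ord0 j|, \sum_k `|P k ord0 j|]%classic) _)).
  by move=> j; exact: segment_compact.
by move=> x /simplex_coord_bound xP j /=; rewrite in_itv /= -ler_norml.
Qed.

(* Around the point with barycentric coordinates all equal to [e], where
   [n * 2e <= 1], a small enough box keeps every coordinate in [[0, 2e]]. *)
Lemma box_sub_simplex :
  exists a b : 'rV[R]_n, (forall i, a ord0 i < b ord0 i) /\ box a b `<=` simplex P.
Proof.
pose e : R := (2 * n.+1%:R)^-1.
pose K : R := \sum_j \sum_k `|invmx edge_mx j k| + 1.
pose r := e / K.
pose c := P ord0 + const_mx e *m edge_mx.
have e0 : 0 < e by rewrite invr_gt0 mulr_gt0 ?ltr0n.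
have K0 : 0 < K by rewrite ltr_wpDl // sumr_ge0 // => j _; exact: sumr_ge0.
have r0 : 0 < r by rewrite divr_gt0.
exists (c - const_mx r), (c + const_mx r); split=> [i|x xc]; first by rewrite !mxE; lra.
have bary_c k : bary c ord0 k = e.
  by rewrite /bary addrC addKr mulmxK ?edge_mx_unit // mxE.
have bary_x k : `|bary x ord0 k - e| <= e.
  rewrite -{1}(bary_c k); apply: le_trans (@bary_sub_le x c r k _) _.
    by move=> j; have /andP[] := xc j; rewrite !mxE ler_distl => -> ->.
  rewrite mulrAC ler_pdivrMr // ler_pM2l //; apply: ler_wpDr => //.
  by apply: ler_sum => j _; rewrite (bigD1 k) //= lerDl sumr_ge0.
rewrite simplexE //; split=> [k|].
  by have := bary_x k; rewrite ler_distl subrr => /andP[].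
apply: le_trans (_ : \sum_(k < n) (e *+ 2) <= 1).
  by apply: ler_sum => k _; have := bary_x k; rewrite ler_distl => /andP[_]; lra.
rewrite sumr_const card_ord -mulrnA -[_ *+ _]mulr_natr /e.
by rewrite ler_pdivrMl ?mulr_gt0 ?ltr0n // mulr1 natrM ler_pM2l ?ltr0n // ler_nat leqnSn.
Qed.

End barycentric.

Arguments edge_mx {R n} P.
Arguments bary {R n} P x.

Section simplex_measure.
Variables (R : realType) (n : nat) (mu : {measure set (Rn R n) -> \bar R}).
Hypothesis hmu : is_lebesgue mu.
Variable P : 'I_n.+1 -> 'rV[R]_n.
Hypothesis hP : aff_indep P.

Lemma simplex_measurable : measurable (simplex P : set (Rn R n)).
Proof. by apply: closed_measurable_Rn; exact: simplex_closed. Qed.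

Let box_measurable (a b : 'rV[R]_n) : measurable (box a b : set (Rn R n)).
Proof. by apply: closed_measurable_Rn; exact: box_closed. Qed.

Lemma simplex_measure_lt_oo : (mu (simplex P : set (Rn R n)) < +oo)%E.
Proof.
pose r j := \sum_k `|P k ord0 j|.
have r0 j : 0 <= r j by exact: sumr_ge0.
apply: (@le_lt_trans _ _ (mu (box (\row_j - r j) (\row_j r j) : set (Rn R n)))).
  apply: le_measure; rewrite ?inE //; first exact: simplex_measurable.
  by move=> x /simplex_coord_bound xP j; rewrite !mxE -ler_norml.
by rewrite hmu ?ltry // => i; rewrite !mxE (le_trans _ (r0 i)) // oppr_le0.
Qed.

Lemma simplex_measure_gt0 : (0 < mu (simplex P : set (Rn R n)))%E.
Proof.
have [a [b [ab abP]]] := @box_sub_simplex R n P hP.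
apply: (@lt_le_trans _ _ (mu (box a b : set (Rn R n)))).
  by rewrite hmu => [|i]; [rewrite lte_fin prodr_gt0 // => i _; rewrite subr_gt0 | exact/ltW].
by apply: le_measure; rewrite ?inE //; exact: simplex_measurable.
Qed.

Lemma simplex_vol_gt0 : 0 < fine (mu (simplex P : set (Rn R n))).
Proof. by rewrite fine_gt0 // simplex_measure_gt0 simplex_measure_lt_oo. Qed.

Lemma continuous_simplex_integrable (h : 'rV[R]_n -> R) :
  {within simplex P, continuous h} ->
  mu.-integrable (simplex P : set (Rn R n)) (EFin \o (h : Rn R n -> R)).
Proof.
move=> ch; apply: measurable_bounded_integrable.
- exact: simplex_measurable.
- exact: simplex_measure_lt_oo.
- exact: subspace_continuous_measurable_fun_Rn simplex_measurable ch.
have /compact_bounded := continuous_compact ch (@simplex_compact R n P hP).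
by rewrite /bounded_near /=; apply: filterS => M HM x Px; apply: HM; exists x.
Qed.

End simplex_measure.

Arguments simplex_measurable {R n P}.
Arguments simplex_vol_gt0 {R n mu} hmu {P}.
Arguments continuous_simplex_integrable {R n mu} hmu {P} hP {h}.

(* No integrability is needed: when the integral is infinite both sides are [0]. *)
Lemma RintegralN d (T : measurableType d) (R : realType)
    (mu : {measure set T -> \bar R}) (D : set T) (f : T -> R) :
  \int[mu]_(x in D) (- f x) = - \int[mu]_(x in D) f x.
Proof.
rewrite /Rintegral.
have -> : (fun x => (- f x)%:E) = (\- (fun x => (f x)%:E))%E by apply: funext.
rewrite integralE funeposN funenegN [in RHS]integralE.
have Ipos : (0 <= \int[mu]_(x in D) (fun x => (f x)%:E)^\+ x)%E.
  by apply: integral_ge0 => x _; exact: funepos_ge0.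
have Ineg : (0 <= \int[mu]_(x in D) (fun x => (f x)%:E)^\- x)%E.
  by apply: integral_ge0 => x _; exact: funeneg_ge0.
move: Ipos Ineg; case: (\int[mu]_(x in D) _)%E => [a| |] //;
  by case: (\int[mu]_(x in D) _)%E => [b| |] //= _ _; rewrite ?oppr0 // opprB.
Qed.

Section piecewise_products.
Variables (R : realType) (n : nat) (mu : {measure set (Rn R n) -> \bar R}).
Hypothesis hmu : is_lebesgue mu.
Variables (I : finType) (vtx : I -> 'I_n.+1 -> 'rV[R]_n).
Hypothesis hvtx : forall i, aff_indep (vtx i).

Definition cell_vol i := fine (mu (simplex (vtx i) : set (Rn R n))).

Definition cell_integral (h : 'rV[R]_n -> R) i :=
  \int[mu]_(x in (simplex (vtx i) : set (Rn R n))) h x.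

Lemma Pi0E h i : Pi0 mu vtx h i = (cell_vol i)^-1 * cell_integral h i.
Proof. by []. Qed.

Lemma ipL2_p0 (a b : I -> R) :
  ipL2 mu vtx (p0 a) (p0 b) = \sum_i a i * b i * cell_vol i.
Proof.
by apply: eq_bigr => i _; rewrite /p0 Rintegral_cst //; exact: simplex_measurable (hvtx i).
Qed.

Lemma ipL2_glob_delta (h : 'rV[R]_n -> R) j :
  ipL2 mu vtx (glob h) (p0 (fun i => (i == j)%:R)) = cell_integral h j.
Proof.
rewrite /ipL2 (bigD1 j) //= big1 ?addr0 => [|i ij].
  by apply: eq_Rintegral => x _; rewrite /p0 eqxx mulr1.
rewrite /p0 (negbTE ij) (@eq_Rintegral _ _ _ _ _ (fun=> 0)) => [|x _]; last by rewrite mulr0.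
by rewrite Rintegral_cst ?mul0r //; exact: simplex_measurable (hvtx i).
Qed.

Section continuous_data.
Variable h : 'rV[R]_n -> R.
Hypothesis hcont : forall i, {within simplex (vtx i), continuous h}.

Let h_integrable i : mu.-integrable (simplex (vtx i) : set (Rn R n)) (EFin \o h) :=
  continuous_simplex_integrable hmu (hvtx i) (hcont i).

Lemma ipL2_p0_glob (a : I -> R) :
  ipL2 mu vtx (p0 a) (glob h) = \sum_i a i * cell_integral h i.
Proof.
apply: eq_bigr => i _; rewrite /p0 /glob RintegralZl //.
exact: simplex_measurable (hvtx i).
Qed.

Lemma ipL2_p0_sub (a u : I -> R) :
  ipL2 mu vtx (p0 a) (fun i x => u i - h x) =
  \sum_i a i * (u i * cell_vol i - cell_integral h i).
Proof.
have mP i := simplex_measurable (hvtx i).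
have iu (i : I) := continuous_simplex_integrable hmu (hvtx i)
  (continuous_subspaceT (@cst_continuous _ _ (u i))).
apply: eq_bigr => i _; rewrite RintegralZl //.
  by rewrite RintegralB // Rintegral_cst.
by rewrite [X in _.-integrable _ X](_ : _ = (EFin \o cst (u i)) \- (EFin \o h))%E;
  [exact: integrableB | apply: funext].
Qed.

End continuous_data.
End piecewise_products.

Arguments cell_vol {R n} mu {I} vtx i.
Arguments cell_integral {R n} mu {I} vtx h i.
Arguments Pi0E {R n mu I vtx} h i.
Arguments ipL2_p0 {R n mu I vtx} hvtx a b.
Arguments ipL2_glob_delta {R n mu I vtx} hvtx h j.
Arguments ipL2_p0_glob {R n mu} hmu {I vtx} hvtx {h} hcont a.
Arguments ipL2_p0_sub {R n mu} hmu {I vtx} hvtx {h} hcont a u.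

Section dotp.
Variables (R : realType) (n : nat).
Implicit Types a b c : 'rV[R]_n.

Lemma dotpDl a b c : dotp (a + b) c = dotp a c + dotp b c.
Proof. by rewrite /dotp -big_split; apply: eq_bigr => i _; rewrite mxE mulrDl. Qed.

Lemma dotpNl a c : dotp (- a) c = - dotp a c.
Proof. by rewrite /dotp -sumrN; apply: eq_bigr => i _; rewrite mxE mulNr. Qed.

Lemma dotpNr a c : dotp a (- c) = - dotp a c.
Proof. by rewrite /dotp -sumrN; apply: eq_bigr => i _; rewrite mxE mulrN. Qed.

Lemma dotp0r a : dotp a 0 = 0.
Proof. by rewrite /dotp big1 // => i _; rewrite mxE mulr0. Qed.

End dotp.

Section raviart_thomas.
Variables (R : realType) (n : nat) (I : finType).
Implicit Types s t : pwRT R n I.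

Definition rt_add s t : pwRT R n I := (fun i => s.1 i + t.1 i, fun i => s.2 i + t.2 i).

Definition rt_opp t : pwRT R n I := (fun i => - t.1 i, fun i => - t.2 i).

Lemma rt_val_add s t i x : rt_val (rt_add s t) i x = rt_val s i x + rt_val t i x.
Proof. by rewrite /rt_val /= scalerDl addrACA. Qed.

Lemma rt_val_opp t i x : rt_val (rt_opp t) i x = - rt_val t i x.
Proof. by rewrite /rt_val /= scaleNr opprD. Qed.

Lemma rt_val_subrr t i x : rt_val (rt_sub t t) i x = 0.
Proof. by rewrite /rt_val /rt_sub /= !subrr scale0r addr0. Qed.

Lemma rt_sub_addKr s t : rt_sub (rt_add s t) s = t.
Proof. by case: t => t1 t2; congr pair; apply: funext => i; rewrite /= addrAC subrr add0r. Qed.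

Lemma rt_div_opp t i : rt_div (rt_opp t) i = - rt_div t i.
Proof. by rewrite /rt_div mulrN. Qed.

Lemma rt_div_subrr t i : rt_div (rt_sub t t) i = 0.
Proof. by rewrite /rt_div /= subrr mulr0. Qed.

Variable vtx : I -> 'I_n.+1 -> 'rV[R]_n.

Lemma RT0_add s t : RT0 vtx s -> RT0 vtx t -> RT0 vtx (rt_add s t).
Proof.
move=> hs ht i j ij cn nu hnu x xi xj.
by rewrite !rt_val_add opprD addrACA dotpDl (hs i j) ?(ht i j) ?addr0.
Qed.

Lemma RT0_opp t : RT0 vtx t -> RT0 vtx (rt_opp t).
Proof.
move=> ht i j ij cn nu hnu x xi xj.
by rewrite !rt_val_opp -opprD dotpNl (ht i j) ?oppr0.
Qed.

Variable mu : {measure set (Rn R n) -> \bar R}.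

Lemma ipRT_oppr s t : ipRT mu vtx s (rt_opp t) = - ipRT mu vtx s t.
Proof.
rewrite /ipRT -sumrN; apply: eq_bigr => i _; rewrite -RintegralN.
by apply: eq_Rintegral => x _; rewrite rt_val_opp dotpNr.
Qed.

Lemma ipRT_subrr s t : ipRT mu vtx s (rt_sub t t) = 0.
Proof.
rewrite /ipRT big1 // => i _; rewrite (@eq_Rintegral _ _ _ _ _ (fun=> 0)).
  by rewrite /Rintegral integral0.
by move=> x _; rewrite rt_val_subrr dotp0r.
Qed.

End raviart_thomas.

Arguments rt_add {R n I}.
Arguments rt_opp {R n I}.
Arguments RT0_add {R n I vtx s t}.
Arguments RT0_opp {R n I vtx t}.

Lemma complementarity (R : numDomainType) (l a : R) : 0 <= l ->
  (forall t, 0 <= l + t -> 0 <= t * a) -> 0 <= a /\ l * a = 0.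
Proof.
move=> l0 hl; have a0 : 0 <= a by rewrite -[a]mul1r hl // addr_ge0.
split=> //; apply/eqP; rewrite eq_le mulr_ge0 // andbT -oppr_ge0 -mulNr.
by apply: hl; rewrite subrr.
Qed.

Section discrete_problem.
Variables (R : realType) (n : nat) (mu : {measure set (Rn R n) -> \bar R}).
Hypothesis hmu : is_lebesgue mu.
Variables (I : finType) (vtx : I -> 'I_n.+1 -> 'rV[R]_n).
Hypothesis hvtx : forall i, aff_indep (vtx i).
Variables (f g : 'rV[R]_n -> R) (sigma : pwRT R n I) (lambda u : I -> R).
Hypothesis hg : forall i, {within simplex (vtx i), continuous g}.
Hypothesis hK : in_Kh vtx sigma lambda.
Hypothesis hvi : forall (tau : pwRT R n I) (m : I -> R), in_Kh vtx tau m ->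
  ipRT mu vtx sigma (rt_sub tau sigma)
  + ipL2 mu vtx (p0 (fun i => rt_div (rt_sub tau sigma) i + m i - lambda i)) (p0 u)
  >= ipL2 mu vtx (p0 (fun i => m i - lambda i)) (glob g).
Hypothesis heq : forall v : I -> R,
  ipL2 mu vtx (p0 (fun i => rt_div sigma i + lambda i)) (p0 v)
  = - ipL2 mu vtx (glob f) (p0 v).

Let vol_gt0 i : 0 < cell_vol mu vtx i := simplex_vol_gt0 hmu (hvtx i).

Lemma div_sigma_add_lambda i : rt_div sigma i + lambda i = - Pi0 mu vtx f i.
Proof.
have := heq (fun j => (j == i)%:R).
rewrite ipL2_p0 // ipL2_glob_delta // (big_only1 i) // => [|j /negbTE-> _]; last first.
  by rewrite mulr0 mul0r.
rewrite eqxx mulr1 Pi0E => /(congr1 ( *%R^~ (cell_vol mu vtx i)^-1)).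
by rewrite mulrK ?unitfE ?lt0r_neq0 // mulNr mulrC.
Qed.

Lemma ipRT_sigma_RT0 tau : RT0 vtx tau ->
  ipRT mu vtx sigma tau + ipL2 mu vtx (p0 (rt_div tau)) (p0 u) = 0.
Proof.
have ge0 t : RT0 vtx t -> 0 <= ipRT mu vtx sigma t + ipL2 mu vtx (p0 (rt_div t)) (p0 u).
  move=> ht; have := @hvi _ _ (conj (RT0_add hK.1 ht) hK.2).
  rewrite rt_sub_addKr (ipL2_p0_glob hmu hvtx hg) big1 => [|i _]; last by rewrite subrr mul0r.
  by under eq_fun do rewrite addrK.
move=> htau; apply/eqP; rewrite eq_le ge0 // andbT -oppr_ge0.
have := ge0 _ (RT0_opp htau); rewrite ipRT_oppr !ipL2_p0 //.
by under eq_bigr do rewrite rt_div_opp !mulNr; rewrite sumrN opprD.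
Qed.

Lemma cell_variational_ineq j t : 0 <= lambda j + t ->
  0 <= t * (u j * cell_vol mu vtx j - cell_integral mu vtx g j).
Proof.
move=> hjt; pose m i := lambda i + (i == j)%:R * t.
have hm : in_Kh vtx sigma m.
  split=> [|i]; first exact: hK.1.
  by rewrite /m; case: eqVneq => [->|_]; rewrite ?mul1r ?mul0r ?addr0 // hK.2.
have dm i : m i - lambda i = (i == j)%:R * t by rewrite /m addrC addKr.
have := @hvi _ _ hm; rewrite ipRT_subrr add0r ipL2_p0 // (ipL2_p0_glob hmu hvtx hg).
under [X in X <= _]eq_bigr do rewrite dm.
under [X in _ <= X]eq_bigr do rewrite rt_div_subrr add0r dm.
rewrite !(big_only1 j) // => [|i /negbTE-> _|i /negbTE-> _]; rewrite ?mul0r //.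
by rewrite eqxx !mul1r mulrBr subr_ge0 !mulrA.
Qed.

Lemma cell_complementarity j :
  0 <= u j * cell_vol mu vtx j - cell_integral mu vtx g j /\
  lambda j * (u j * cell_vol mu vtx j - cell_integral mu vtx g j) = 0.
Proof. exact: complementarity (hK.2 j) (cell_variational_ineq j). Qed.

Let sub_Pi0E j : u j - Pi0 mu vtx g j =
  (cell_vol mu vtx j)^-1 * (u j * cell_vol mu vtx j - cell_integral mu vtx g j).
Proof. by rewrite Pi0E mulrBr mulrCA mulVf ?mulr1 // lt0r_neq0. Qed.

Lemma Pi0_le_u j : 0 <= u j - Pi0 mu vtx g j.
Proof.
rewrite sub_Pi0E mulr_ge0 ?(cell_complementarity j).1 //.
by rewrite invr_ge0 ltW.
Qed.

Lemma lambda_mul_sub_Pi0 j : lambda j * (u j - Pi0 mu vtx g j) = 0.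
Proof. by rewrite sub_Pi0E mulrCA (cell_complementarity j).2 mulr0. Qed.

Lemma ipL2_lambda_sub : ipL2 mu vtx (p0 lambda) (fun i x => u i - g x) = 0.
Proof.
by rewrite (ipL2_p0_sub hmu hvtx hg) big1 // => j _; exact: (cell_complementarity j).2.
Qed.

End discrete_problem.

Arguments div_sigma_add_lambda {R n mu} hmu {I vtx} hvtx {f sigma lambda} heq i.
Arguments ipRT_sigma_RT0 {R n mu} hmu {I vtx} hvtx {g sigma lambda u} hg hK hvi tau _.
Arguments Pi0_le_u {R n mu} hmu {I vtx} hvtx {g sigma lambda u} hg hK hvi j.
Arguments lambda_mul_sub_Pi0 {R n mu} hmu {I vtx} hvtx {g sigma lambda u} hg hK hvi j.
Arguments ipL2_lambda_sub {R n mu} hmu {I vtx} hvtx {g sigma lambda u} hg hK hvi.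

Theorem proposition3p3 (R : realType) (n : nat)
  (mu : {measure set (Rn R n) -> \bar R})
  (Omega : set 'rV[R]_n) (f g : 'rV[R]_n -> R)
  (I : finType) (vtx : I -> 'I_n.+1 -> 'rV[R]_n)
  (sigma_h : pwRT R n I) (lambda_h u_h : I -> R) :
  (n == 2)%N || (n == 3)%N ->
  is_lebesgue mu ->
  bounded_domain Omega ->
  L2 mu Omega f ->
  H1 mu Omega g ->
  {within closure Omega, continuous g} ->
  (forall x, closure Omega x -> ~ Omega x -> g x <= 0) ->
  conforming_mesh Omega vtx ->
  (* (sigma_h, lambda_h) in K_h, u_h in M_h solve the discrete problem *)
  in_Kh vtx sigma_h lambda_h ->
  (forall (tau_h : pwRT R n I) (mu_h : I -> R), in_Kh vtx tau_h mu_h ->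
     ipRT mu vtx sigma_h (rt_sub tau_h sigma_h)
     + ipL2 mu vtx
         (p0 (fun i => rt_div (rt_sub tau_h sigma_h) i + mu_h i - lambda_h i))
         (p0 u_h)
     >= ipL2 mu vtx (p0 (fun i => mu_h i - lambda_h i)) (glob g)) ->
  (forall v_h : I -> R,
     ipL2 mu vtx (p0 (fun i => rt_div sigma_h i + lambda_h i)) (p0 v_h)
     = - ipL2 mu vtx (glob f) (p0 v_h)) ->
  [/\ (* (i) *)
      forall i, rt_div sigma_h i + lambda_h i = - Pi0 mu vtx f i,
      (* (ii) *)
      forall tau_h : pwRT R n I, RT0 vtx tau_h ->
        ipRT mu vtx sigma_h tau_h + ipL2 mu vtx (p0 (rt_div tau_h)) (p0 u_h) = 0,
      (* (iii) *)
      ipL2 mu vtx (p0 lambda_h) (fun i x => u_h i - g x) = 0 /\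
      (forall i, lambda_h i * (u_h i - Pi0 mu vtx g i) = 0)
    & (* (iv) *)
      forall i, 0 <= u_h i - Pi0 mu vtx g i].
Proof.
move=> _ hmu _ _ _ gcont _ [hvtx _ _ cover] hK hvi heq.
have hg i : {within simplex (vtx i), continuous g}.
  by apply: continuous_subspaceW gcont => x xi; rewrite -cover; exists i.
split.
- exact: (div_sigma_add_lambda hmu hvtx heq).
- exact: (ipRT_sigma_RT0 hmu hvtx hg hK hvi).
- split; [exact: (ipL2_lambda_sub hmu hvtx hg hK hvi) |
         exact: (lambda_mul_sub_Pi0 hmu hvtx hg hK hvi)].
- exact: (Pi0_le_u hmu hvtx hg hK hvi).
Qed.
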